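(* A hermitian operator $R$ on $\mathcal H_{2N-1}\otimes\cdots\otimes\mathcal H_0$ satisfies the normalization conditions of a deterministic quantum $N$-comb (i.e. there exist $R^{(n)}$ as in the definition) if and only if $$R=\frac{1}{d_{2N-1}d_{2N-3}\cdots d_1}\,I_{2N-1,\dots,0}+X$$ for some $X$ in the real linear span of $\mathbb D_{(N)}$. Consequently $R$ is a deterministic quantum $N$-comb iff it is positive and of this form.
   Context: All Hilbert spaces are finite-dimensional, $d_k=\dim\mathcal H_k$, $I_k$ is the identity on $\mathcal H_k$ and $I_{2N-1,\dots,0}$ the identity on the whole space. A deterministic quantum $N$-comb is a positive operator $R$ for which there are operators $R^{(n)}$ on $\mathcal H_0\otimes\cdots\otimes\mathcal H_{2n-1}$, $n=1,\dots,N$, with $R^{(N)}=R$, $\operatorname{Tr}_{2n-1}R^{(n)}=I_{2n-2}\otimes R^{(n-1)}$ for $2\le n\le N$, and $\operatorname{Tr}_1R^{(1)}=I_0$. For each $k$ let $\{E^{(k)}_a\}_{a=2}^{d_k^2}$ be a basis of traceless hermitian operators on $\mathcal H_k$, and for even $k$ let $\{F^{(k)}_j\}$ be a basis of hermitian operators on $\mathcal H_k\otimes\cdots\otimes\mathcal H_0$. $\mathbb D_{(N)}$ is the set of operators $I_{2N-1}\otimes\cdots\otimes I_{2n}\otimes E^{(2n-1)}_a\otimes F^{(2n-2)}_j$, $n=1,\dots,N$. *)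

From HB Require Import structures.
From mathcomp Require Import all_boot all_order all_algebra.
Set Implicit Arguments. Unset Strict Implicit. Unset Printing Implicit Defensive.
Import Order.TTheory GRing.Theory Num.Theory.
Local Open Scope ring_scope.

(* Splitting an index of 'I_(m*n) into a pair (i, j), i major (Kronecker order);
   inverse of mxvec_index. *)
Definition tens_split (m n : nat) (k : 'I_(m * n)) : 'I_m * 'I_n :=
  enum_val (cast_ord (esym (mxvec_cast m n)) k).

(* Kronecker (tensor) product A (x) B, A acting on the left (major) factor. *)
Definition tensmx {R : pzSemiRingType} (m1 n1 m2 n2 : nat)
  (A : 'M[R]_(m1, n1)) (B : 'M[R]_(m2, n2)) : 'M[R]_(m1 * m2, n1 * n2) :=
  \matrix_(k, l) (A (tens_split k).1 (tens_split l).1 *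
                  B (tens_split k).2 (tens_split l).2).

(* Partial trace over the left (major) factor: Tr_1 on C^p (x) C^q. *)
Definition ptrace {R : pzSemiRingType} (p q : nat) (A : 'M[R]_(p * q)) : 'M[R]_q :=
  \matrix_(i, j) \sum_(k < p) A (mxvec_index k i) (mxvec_index k j).

(* dimension of H_{n-1} (x) ... (x) H_0 ;  Dim d 0 = 1 (empty tensor product) *)
Fixpoint Dim (d : nat -> nat) (n : nat) : nat :=
  if n is n'.+1 then (d n' * Dim d n')%N else 1%N.

(* Tr_{n} : operators on H_n (x) ... (x) H_0  ->  operators on H_{n-1} (x) ... (x) H_0 *)
Definition Tr_top {R : pzSemiRingType} (d : nat -> nat) (n : nat)
  (X : 'M[R]_(Dim d n.+1)) : 'M[R]_(Dim d n) := @ptrace R (d n) (Dim d n) X.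

Definition I_top {R : pzSemiRingType} (d : nat -> nat) (n : nat)
  (Y : 'M[R]_(Dim d n)) : 'M[R]_(Dim d n.+1) := tensmx (1%:M : 'M[R]_(d n)) Y.

(* liftI d n M Y = I_{M-1} (x) ... (x) I_n (x) Y  for n <= M
   (Y an operator on H_{n-1} (x) ... (x) H_0).  Only used with n <= M. *)
Fixpoint liftI {R : pzSemiRingType} (d : nat -> nat) (n M : nat) :
    'M[R]_(Dim d n) -> 'M[R]_(Dim d M) :=
  match M return 'M[R]_(Dim d n) -> 'M[R]_(Dim d M) with
  | 0 => fun Y => conform_mx 0 Y
  | M'.+1 => fun Y => if n == M'.+1 then conform_mx 0 Y
                      else I_top (@liftI R d n M' Y)
  end.

(* Normalization conditions of a deterministic quantum N-comb:
   there are R^(n) on H_0 (x) ... (x) H_{2n-1} (here Rs n), n = 1..N, with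
   R^(N) = R, Tr_{2n-1} R^(n) = I_{2n-2} (x) R^(n-1) for 2 <= n <= N,
   and Tr_1 R^(1) = I_0. *)
Definition comb_normalized {C : numClosedFieldType} (d : nat -> nat) (N : nat)
    (R : 'M[C]_(Dim d N.*2)) : Prop :=
  exists Rs : forall n : nat, 'M[C]_(Dim d n.*2),
   (* Rs n plays the role of R^(n); only 1 <= n <= N matter *)
    [/\ Rs N = R,
        @Tr_top C d 1 (Rs 1%N) = 1%:M &
        forall m : nat, (0 < m < N)%N ->
          @Tr_top C d m.*2.+1 (Rs m.+1) = @I_top C d m.*2 (Rs m)].

Definition psd {C : numClosedFieldType} (n : nat) (A : 'M[C]_n) : Prop :=
  forall v : 'cV[C]_n, 0 <= ((map_mx Num.conj v)^T *m A *m v) 0 0.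

Definition det_comb {C : numClosedFieldType} (d : nat -> nat) (N : nat)
    (R : 'M[C]_(Dim d N.*2)) : Prop :=
  psd R /\ comb_normalized R.

Definition real_basis {C : numClosedFieldType} (n k : nat)
    (P : 'M[C]_n -> Prop) (B : 'I_k -> 'M[C]_n) : Prop :=
  [/\ forall i, P (B i),
      forall c : 'I_k -> C, (forall i, c i \is Num.real) ->
         \sum_(i < k) c i *: B i = 0 -> forall i, c i = 0 &
      forall A, P A -> exists c : 'I_k -> C,
         (forall i, c i \is Num.real) /\ A = \sum_(i < k) c i *: B i].

Definition herm_op {C : numClosedFieldType} (n : nat) (A : 'M[C]_n) : Prop :=
  A^T = map_mx Num.conj A.

Definition traceless_herm_op {C : numClosedFieldType} (n : nat) (A : 'M[C]_n) : Prop :=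
  herm_op A /\ \tr A = 0.

(* The element  I_{2N-1} (x) ... (x) I_{2n} (x) E (x) F  of D_(N), with n = m+1,
   E on H_{2m+1} and F on H_{2m} (x) ... (x) H_0. *)
Definition D_elem {C : numClosedFieldType} (d : nat -> nat) (N m : nat)
    (E : 'M[C]_(d m.*2.+1)) (F : 'M[C]_(Dim d m.*2.+1)) : 'M[C]_(Dim d N.*2) :=
  @liftI C d m.*2.+2 N.*2 (tensmx E F : 'M[C]_(Dim d m.*2.+2)).

Definition in_real_span_D {C : numClosedFieldType} (d : nat -> nat) (N : nat)
    (mE mF : nat -> nat)
    (E : forall k : nat, 'I_(mE k) -> 'M[C]_(d k))
    (F : forall k : nat, 'I_(mF k) -> 'M[C]_(Dim d k.+1))
    (X : 'M[C]_(Dim d N.*2)) : Prop :=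
  exists c : forall m : 'I_N, 'I_(mE (m : nat).*2.+1) -> 'I_(mF (m : nat).*2) -> C,
    (forall m a j, c m a j \is Num.real) /\
    X = \sum_(m < N) \sum_(a < mE (m : nat).*2.+1) \sum_(j < mF (m : nat).*2)
          c m a j *: D_elem N (E _ a) (F _ j).

From HB Require Import structures.
From mathcomp Require Import all_boot all_order all_algebra.
From mathcomp Require Import ring.
Set Implicit Arguments. Unset Strict Implicit. Unset Printing Implicit Defensive.
Import Order.TTheory GRing.Theory Num.Theory.
Local Open Scope ring_scope.

(* Writing Z_k for the traceless part
     Z_k = R^(k+1) - d_(2k+1)^-1 I (x) Tr_(2k+1) R^(k+1),
   the conditions say exactly that R^(k+1) = d_(2k+1)^-1 I (x) I (x) R^(k) + Z_k
   with R^(0) = 1 and Tr_(2k+1) Z_k = 0.  Unfolding this recursion (combR)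
   gives R = Pd^-1 (I + sum_k I (x) ... (x) I (x) Z_k), and conversely any
   family of increments with vanishing partial trace yields a normalized R.
   Finally a hermitian operator on H_(2k+1) (x) (H_(2k) (x) ... (x) H_0) whose
   partial trace over H_(2k+1) vanishes is exactly a real combination of the
   products E_a (x) F_j (tens_decomp), which identifies the increments with
   the real span of D_(N). *)

Lemma tens_splitK m n (i : 'I_m) (j : 'I_n) : tens_split (mxvec_index i j) = (i, j).
Proof. by rewrite /tens_split /mxvec_index cast_ordK enum_rankK. Qed.

Section Operators.
Variable C : numClosedFieldType.

Lemma tensmxE m1 n1 m2 n2 (A : 'M[C]_(m1, n1)) (B : 'M[C]_(m2, n2)) i j k l :
  tensmx A B (mxvec_index i j) (mxvec_index k l) = A i k * B j l.
Proof. by rewrite /tensmx mxE !tens_splitK. Qed.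

Lemma ptraceE p q (A : 'M[C]_(p * q)) i j :
  ptrace A i j = \sum_(k < p) A (mxvec_index k i) (mxvec_index k j).
Proof. by rewrite /ptrace mxE. Qed.

Lemma tens_matrixP p q (A B : 'M[C]_(p * q)) :
  (forall s i t l, A (mxvec_index s i) (mxvec_index t l) =
                   B (mxvec_index s i) (mxvec_index t l)) -> A = B.
Proof.
move=> eqAB; apply/matrixP => x y.
by case/mxvec_indexP: x => s i; case/mxvec_indexP: y => t l.
Qed.

Lemma tensmx_suml p q I (r : seq I) (P : pred I) (c : I -> C) (A : I -> 'M[C]_p)
    (B : 'M[C]_q) :
  tensmx (\sum_(i <- r | P i) c i *: A i) B = \sum_(i <- r | P i) c i *: tensmx (A i) B.
Proof.
apply: tens_matrixP => s i t l; rewrite tensmxE !summxE mulr_suml.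
by apply: eq_bigr => x _; rewrite !mxE !tens_splitK mulrA.
Qed.

Lemma tensmx_is_linear p q (A : 'M[C]_p) : linear (@tensmx C p p q q A).
Proof.
by move=> a B B'; apply: tens_matrixP => s i t l; rewrite !mxE !tens_splitK mulrDr mulrCA.
Qed.

HB.instance Definition _ p q (A : 'M[C]_p) :=
  GRing.isLinear.Build C 'M[C]_q 'M[C]_(p * q) _ (@tensmx C p p q q A)
    (@tensmx_is_linear p q A).

Lemma tensmx11 p q : tensmx (1%:M : 'M[C]_p) (1%:M : 'M[C]_q) = 1%:M.
Proof.
apply: tens_matrixP => s i t l; rewrite tensmxE !mxE.
have -> : (mxvec_index s i == mxvec_index t l) = (s == t) && (i == l).
  apply/eqP/andP => [eq_idx | [/eqP-> /eqP->] //].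
  by have := congr1 (@tens_split _ _) eq_idx; rewrite !tens_splitK => -[-> ->].
by case: (s == t); case: (i == l); rewrite ?mulr1 ?mulr0.
Qed.

Lemma ptrace_tens p q (A : 'M[C]_p) (B : 'M[C]_q) : ptrace (tensmx A B) = \tr A *: B.
Proof.
apply/matrixP => i j; rewrite ptraceE !mxE /mxtrace mulr_suml.
by apply: eq_bigr => k _; rewrite tensmxE.
Qed.

Lemma ptrace_is_linear p q : linear (@ptrace C p q).
Proof.
move=> a X Y; apply/matrixP => i j; rewrite !mxE mulr_sumr -big_split /=.
by apply: eq_bigr => k _; rewrite !mxE.
Qed.

HB.instance Definition _ p q :=
  GRing.isLinear.Build C 'M[C]_(p * q) 'M[C]_q _ (@ptrace C p q) (@ptrace_is_linear p q).

Lemma ptrace_traceless_part p q (Y : 'M[C]_(p * q)) :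
  p%:R != 0 :> C -> ptrace (Y - p%:R^-1 *: tensmx (1%:M : 'M[C]_p) (ptrace Y)) = 0.
Proof.
by move=> p_nz; rewrite linearB linearZ /= ptrace_tens mxtrace1 scalerA mulVf ?scale1r ?subrr.
Qed.

End Operators.

Section Hermitian.
Variable C : numClosedFieldType.

Lemma hermE n (A : 'M[C]_n) : herm_op A <-> (forall i j, (A i j)^* = A j i).
Proof.
rewrite /herm_op; split=> [hA i j | hA]; last by apply/matrixP => i j; rewrite !mxE hA.
by have := congr1 (fun M : 'M[C]_n => M j i) hA; rewrite !mxE => ->; rewrite conjCK.
Qed.

Lemma hermD n (A B : 'M[C]_n) : herm_op A -> herm_op B -> herm_op (A + B).
Proof. by move=> /hermE hA /hermE hB; apply/hermE => i j; rewrite !mxE rmorphD /= hA hB. Qed.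

Lemma hermZ n a (A : 'M[C]_n) : a \is Num.real -> herm_op A -> herm_op (a *: A).
Proof. by move=> ra /hermE hA; apply/hermE => i j; rewrite !mxE rmorphM /= hA conj_Creal. Qed.

Lemma hermB n (A B : 'M[C]_n) : herm_op A -> herm_op B -> herm_op (A - B).
Proof. by move=> hA hB; rewrite -scaleN1r; apply/hermD/hermZ; rewrite ?rpredN1. Qed.

Lemma herm_ptrace p q (A : 'M[C]_(p * q)) : herm_op A -> herm_op (ptrace A).
Proof.
move=> /hermE hA; apply/hermE => i j; rewrite !ptraceE rmorph_sum /=.
by apply: eq_bigr => k _; rewrite hA.
Qed.

Lemma herm_tens1 p q (A : 'M[C]_q) : herm_op A -> herm_op (tensmx (1%:M : 'M[C]_p) A).
Proof.
move=> /hermE hA; apply/hermE => x y.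
case/mxvec_indexP: x => s i; case/mxvec_indexP: y => t l.
by rewrite !tensmxE rmorphM /= hA !mxE eq_sym; case: (t == s); rewrite ?conjC1 ?conjC0.
Qed.

Lemma herm_of_tens1 p q (A : 'M[C]_q) : (0 < p)%N ->
  herm_op (tensmx (1%:M : 'M[C]_p) A) -> herm_op A.
Proof.
move=> p_gt0 /hermE hA; apply/hermE => i j; pose s := Ordinal p_gt0.
by have := hA (mxvec_index s i) (mxvec_index s j); rewrite !tensmxE !mxE eqxx !mul1r.
Qed.

Lemma herm_split n (A : 'M[C]_n) :
  exists H1 H2 : 'M[C]_n, [/\ herm_op H1, herm_op H2 & A = H1 + 'i *: H2].
Proof.
have real_half : (2 : C)^-1 \is Num.real by rewrite rpredV realn.
exists (\matrix_(i, j) ((A i j + (A j i)^*) / 2)),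
       (\matrix_(i, j) ((A i j - (A j i)^*) * (- 'i / 2))); split.
- apply/hermE => i j; rewrite !mxE rmorphM /= rmorphD /= conjCK addrC.
  by rewrite (conj_Creal real_half).
- apply/hermE => i j; rewrite !mxE rmorphM /= rmorphB /= conjCK rmorphM /= rmorphN /=.
  by rewrite conjCi (conj_Creal real_half); ring.
- apply/matrixP => i j; rewrite !mxE.
  have -> : 'i * ((A i j - (A j i)^*) * (- 'i / 2)) = - ('i * 'i) * ((A i j - (A j i)^*) / 2).
    by ring.
  by rewrite mulCii opprK mul1r; field.
Qed.

Section RealBasis.
Variables (n k : nat) (B : 'I_k -> 'M[C]_n).
Hypothesis basisB : real_basis (@herm_op C n) B.

Lemma real_basis_free (w : 'I_k -> C) :
  \sum_(i < k) w i *: B i = 0 -> forall i, w i = 0.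
Proof.
case: basisB => hermB freeB _ sum0.
have conj_sum0 : \sum_(i < k) (w i)^* *: B i = 0.
  apply/matrixP => x y; rewrite summxE mxE.
  have := congr1 (fun M : 'M[C]_n => (M y x)^*) sum0.
  rewrite summxE mxE rmorph_sum /= conjC0 => conj_eq; apply: etrans conj_eq.
  by apply: eq_bigr => i _; rewrite !mxE rmorphM /= (proj1 (hermE _) (hermB i)).
move=> i.
have re0 : w i + (w i)^* = 0.
  apply: (freeB (fun j => w j + (w j)^*)) => [j|].
    by rewrite CrealE rmorphD /= conjCK addrC.
  by under eq_bigr do rewrite scalerDl; rewrite big_split /= sum0 conj_sum0 addr0.
have im0 : 'i * (w i - (w i)^*) = 0.
  apply: (freeB (fun j => 'i * (w j - (w j)^*))) => [j|].
    by rewrite CrealE rmorphM /= rmorphB /= conjCK conjCi; apply/eqP; ring.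
  under eq_bigr do rewrite -scalerA scalerBl.
  by rewrite -scaler_sumr sumrB sum0 conj_sum0 subrr scaler0.
move: im0 => /eqP; rewrite mulf_eq0 (negbTE (@neq0Ci C)) /= subr_eq0 => /eqP conj_wi.
by move: re0 => /eqP; rewrite -conj_wi -mulr2n mulrn_eq0 => /eqP.
Qed.

Lemma real_basis_span (A : 'M[C]_n) : exists z : 'I_k -> C, A = \sum_(i < k) z i *: B i.
Proof.
case: basisB => _ _ spanB; have [H1 [H2 [hH1 hH2 ->]]] := herm_split A.
have [a [_ ->]] := spanB _ hH1; have [b [_ ->]] := spanB _ hH2.
exists (fun i => a i + 'i * b i).
by rewrite scaler_sumr -big_split; apply: eq_bigr => i _; rewrite scalerDl scalerA.
Qed.

End RealBasis.
End Hermitian.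

Section TensorSpan.
Variable C : numClosedFieldType.

Definition in_tens_span (p q ke kf : nat) (E : 'I_ke -> 'M[C]_p) (F : 'I_kf -> 'M[C]_q)
    (Y : 'M[C]_(p * q)) : Prop :=
  exists c : 'I_ke -> 'I_kf -> C, (forall a j, c a j \is Num.real) /\
    Y = \sum_(a < ke) \sum_(j < kf) c a j *: tensmx (E a) (F j).

Variables (p q ke kf : nat) (E : 'I_ke -> 'M[C]_p) (F : 'I_kf -> 'M[C]_q).

Lemma tens_span_scale a Y : a \is Num.real -> in_tens_span E F Y -> in_tens_span E F (a *: Y).
Proof.
move=> ra [c [rc ->]]; exists (fun b j => a * c b j); split=> [b j|].
  by rewrite rpredM.
rewrite scaler_sumr; apply: eq_bigr => b _.
by rewrite scaler_sumr; apply: eq_bigr => j _; rewrite scalerA.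
Qed.

Lemma tens_span_ptrace Y : (forall a, \tr (E a) = 0) -> in_tens_span E F Y -> ptrace Y = 0.
Proof.
move=> trE [c [_ ->]]; rewrite linear_sum big1 // => a _.
by rewrite linear_sum big1 // => j _; rewrite linearZ /= ptrace_tens trE scale0r scaler0.
Qed.

Lemma tens_sumE (K : 'I_kf -> 'M[C]_p) s i t l :
  (\sum_(j < kf) tensmx (K j) (F j)) (mxvec_index s i) (mxvec_index t l) =
  \sum_(j < kf) K j s t * F j i l.
Proof. by rewrite summxE; apply: eq_bigr => j _; rewrite tensmxE. Qed.

Hypothesis basisF : real_basis (@herm_op C q) F.

Lemma tens_expand (Y : 'M[C]_(p * q)) :
  exists K : 'I_kf -> 'M[C]_p, Y = \sum_(j < kf) tensmx (K j) (F j).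
Proof.
pose block s t : 'M[C]_q := \matrix_(i, l) Y (mxvec_index s i) (mxvec_index t l).
have /fin_all_exists [z zE] s : exists z : 'I_p -> 'I_kf -> C,
    forall t, block s t = \sum_(j < kf) z t j *: F j.
  by have /fin_all_exists [z zE] t := real_basis_span basisF (block s t); exists z.
exists (fun j => \matrix_(s, t) z s t j); apply: tens_matrixP => s i t l.
rewrite tens_sumE; have := congr1 (fun M : 'M[C]_q => M i l) (zE s t).
by rewrite summxE mxE => ->; apply: eq_bigr => j _; rewrite !mxE.
Qed.

Lemma tens_expand_free (L : 'I_kf -> 'M[C]_p) :
  \sum_(j < kf) tensmx (L j) (F j) = 0 -> forall j, L j = 0.
Proof.
move=> sum0 j; apply/matrixP => s t; rewrite mxE.
apply: (real_basis_free basisF (w := fun j => L j s t)) => //.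
apply/matrixP => i l.
have := congr1 (fun M : 'M[C]_(p * q) => M (mxvec_index s i) (mxvec_index t l)) sum0.
rewrite tens_sumE mxE summxE mxE => sum0_entry; apply: etrans sum0_entry.
by apply: eq_bigr => j' _; rewrite !mxE.
Qed.

Lemma tens_expand_herm (K : 'I_kf -> 'M[C]_p) :
  herm_op (\sum_(j < kf) tensmx (K j) (F j)) -> forall j, herm_op (K j).
Proof.
case: basisF => hermF _ _ /hermE hY j; apply/hermE => s t.
pose L j : 'M[C]_p := \matrix_(s, t) ((K j t s)^* - K j s t).
suff /(_ j) /matrixP /(_ t s) : forall j, L j = 0.
  by rewrite !mxE => /eqP; rewrite subr_eq0 => /eqP.
apply: tens_expand_free; apply: tens_matrixP => s' i t' l; rewrite tens_sumE mxE.
under eq_bigr do rewrite mxE mulrBl; rewrite sumrB -tens_sumE -hY tens_sumE.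
rewrite rmorph_sum /=; apply/eqP; rewrite subr_eq0; apply/eqP/eq_bigr => j' _.
by rewrite rmorphM /= (proj1 (hermE _) (hermF j')).
Qed.

(* The partial trace of sum_j K_j (x) F_j is sum_j Tr(K_j) F_j. *)
Lemma tens_expand_ptrace (K : 'I_kf -> 'M[C]_p) :
  ptrace (\sum_(j < kf) tensmx (K j) (F j)) = 0 -> forall j, \tr (K j) = 0.
Proof.
move=> tr0; apply: (real_basis_free basisF (w := fun j => \tr (K j))); apply: etrans tr0.
by rewrite linear_sum; apply: eq_bigr => j _ /=; rewrite ptrace_tens.
Qed.

Lemma tens_decomp (Y : 'M[C]_(p * q)) : real_basis (@traceless_herm_op C p) E ->
  herm_op Y -> ptrace Y = 0 -> in_tens_span E F Y.
Proof.
case=> _ _ spanE hY trY; have [K YE] := tens_expand Y.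
rewrite YE in hY trY.
have /fin_all_exists [c cE] j : exists c : 'I_ke -> C,
    (forall a, c a \is Num.real) /\ K j = \sum_(a < ke) c a *: E a.
  by apply: spanE; split; [apply: tens_expand_herm | apply: tens_expand_ptrace].
exists (fun a j => c j a); split=> [a j|]; first by case: (cE j).
rewrite YE exchange_big /=; apply: eq_bigr => j _.
by case: (cE j) => _ ->; rewrite tensmx_suml.
Qed.

End TensorSpan.

Section Comb.
Variables (C : numClosedFieldType) (d : nat -> nat).
Local Notation lift n M := (@liftI C d n M).

Lemma liftI_id n (Y : 'M[C]_(Dim d n)) : lift n n Y = Y.
Proof. by case: n Y => [|n] Y /=; rewrite ?eqxx conform_mx_id. Qed.

Lemma liftI_S n M (Y : 'M[C]_(Dim d n)) : (n <= M)%N -> lift n M.+1 Y = I_top (lift n M Y).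
Proof. by move=> le_nM; rewrite /= ifN // neq_ltn ltnS le_nM. Qed.

Lemma liftI_linear n M a (Y Y' : 'M[C]_(Dim d n)) : (n <= M)%N ->
  lift n M (a *: Y + Y') = a *: lift n M Y + lift n M Y'.
Proof.
move=> /subnKC <-; elim: (M - n)%N => [|k IH]; first by rewrite addn0 !liftI_id.
by rewrite addnS !liftI_S ?leq_addr // IH /I_top linearP.
Qed.

Lemma liftI0 n M : (n <= M)%N -> lift n M 0 = 0.
Proof.
move=> le_nM; have := liftI_linear (-1) 0 0 le_nM.
by rewrite scaler0 addr0 scaleN1r addNr.
Qed.

Lemma liftIZ n M a (Y : 'M[C]_(Dim d n)) : (n <= M)%N -> lift n M (a *: Y) = a *: lift n M Y.
Proof. by move=> le_nM; rewrite -[a *: Y]addr0 liftI_linear // liftI0 // addr0. Qed.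

Lemma liftI_sum n M I (r : seq I) (P : pred I) (Y : I -> 'M[C]_(Dim d n)) : (n <= M)%N ->
  lift n M (\sum_(i <- r | P i) Y i) = \sum_(i <- r | P i) lift n M (Y i).
Proof.
move=> le_nM; apply: (big_morph _ _ (liftI0 le_nM)) => Y1 Y2.
by rewrite -[Y1]scale1r liftI_linear // !scale1r.
Qed.

Definition Pd (n : nat) : nat := (\prod_(k < n) d k.*2.+1)%N.

Lemma PdS n : Pd n.+1 = (Pd n * d n.*2.+1)%N.
Proof. by rewrite /Pd big_ord_recr. Qed.

Fixpoint combR (Z : forall k, 'M[C]_(Dim d k.*2.+2)) (n : nat) : 'M[C]_(Dim d n.*2) :=
  match n return 'M[C]_(Dim d n.*2) with
  | 0 => 1%:M
  | k.+1 => (d k.*2.+1)%:R^-1 *: I_top (I_top (combR Z k)) + (Pd k.+1)%:R^-1 *: Z k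
  end.

Lemma combR_expand (Z : forall k, 'M[C]_(Dim d k.*2.+2)) n :
  combR Z n = (Pd n)%:R^-1 *: (1%:M + \sum_(k < n) lift k.*2.+2 n.*2 (Z k)).
Proof.
elim: n => [|n IH]; first by rewrite big_ord0 addr0 /Pd big_ord0 invr1 scale1r.
have lift_step k : (k < n)%N ->
    lift k.*2.+2 n.+1.*2 (Z k) = I_top (I_top (lift k.*2.+2 n.*2 (Z k))).
  move=> lt_kn; have le_k : (k.*2.+2 <= n.*2)%N by rewrite -doubleS leq_double.
  by rewrite (liftI_S (M := n.*2.+1)) ?(leqW le_k) // liftI_S.
rewrite [LHS]/= IH big_ord_recr liftI_id addrA [RHS]scalerDr; congr (_ + _).
rewrite (eq_bigr (fun k : 'I_n => I_top (I_top (lift k.*2.+2 n.*2 (Z k))))); last first.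
  by move=> k _; exact: (lift_step k (ltn_ord k)).
set M := 1%:M + _; rewrite /I_top !linearZ /= scalerA PdS natrM invfM mulrC.
by congr (_ *: _); rewrite /M !linearD !linear_sum /= !tensmx11.
Qed.
End Comb.

Section Normalization.
Variables (C : numClosedFieldType) (d : nat -> nat).

Lemma natr_pos_neq0 n : (0 < n)%N -> n%:R != 0 :> C.
Proof. by rewrite pnatr_eq0 -lt0n. Qed.

Lemma Pd_neq0 n : (forall k, (k < n)%N -> (0 < d k.*2.+1)%N) -> (Pd d n)%:R != 0 :> C.
Proof. by move=> hd; apply/natr_pos_neq0; rewrite prodn_gt0 // => k; apply: hd. Qed.

Lemma combR_trace (Z : forall k, 'M[C]_(Dim d k.*2.+2)) k :
  (0 < d k.*2.+1)%N -> ptrace (Z k) = 0 ->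
  Tr_top (combR Z k.+1) = I_top (combR Z k).
Proof.
move=> d_gt0 trZ; rewrite [combR Z k.+1]/= /Tr_top /I_top linearD !linearZ /= trZ.
by rewrite ptrace_tens mxtrace1 scalerA mulVf ?natr_pos_neq0 // scale1r scaler0 addr0.
Qed.

Lemma combR_normalized N (Z : forall k, 'M[C]_(Dim d k.*2.+2)) : (0 < N)%N ->
  (forall k, (k < N)%N -> (0 < d k.*2.+1)%N /\ ptrace (Z k) = 0) ->
  comb_normalized (combR Z N).
Proof.
move=> N_gt0 hZ; exists (combR Z); split=> // [|m /andP [_ lt_mN]].
  by have [d_gt0 trZ] := hZ 0%N N_gt0; rewrite (@combR_trace Z 0) //= /I_top tensmx11.
by have [d_gt0 trZ] := hZ m lt_mN; apply: combR_trace.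
Qed.

Lemma normalized_combR N (R : 'M[C]_(Dim d N.*2)) : (0 < N)%N ->
  (forall k, (k < N.*2)%N -> (0 < d k)%N) -> herm_op R -> comb_normalized R ->
  exists Z : forall k, 'M[C]_(Dim d k.*2.+2),
    (forall k, (k < N)%N -> herm_op (Z k) /\ ptrace (Z k) = 0) /\ R = combR Z N.
Proof.
move=> N_gt0 d_gt0 hR [Rs [RsN Rs1 Rs_step]].
(* The witnesses R^(n), completed by R^(0) = 1 so that all conditions
   take the uniform shape Tr R^(k+1) = I (x) R^(k). *)
pose Rs0 n : 'M[C]_(Dim d n.*2) :=
  match n return 'M[C]_(Dim d n.*2) with 0 => 1%:M | n'.+1 => Rs n'.+1 end.
have chain k : (k < N)%N -> Tr_top (Rs k.+1) = I_top (Rs0 k).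
  case: k => [|k] lt_kN; first by rewrite Rs1 /I_top tensmx11.
  exact: (Rs_step k.+1).
have d_odd k : (k < N)%N -> (0 < d k.*2.+1)%N.
  by move=> lt_kN; apply: d_gt0; rewrite -doubleS leq_double.
have Rs0N : Rs0 N = R by rewrite -RsN; case: (N) N_gt0.
pose Z k : 'M[C]_(Dim d k.*2.+2) :=
  (Pd d k.+1)%:R *: (Rs k.+1 - (d k.*2.+1)%:R^-1 *: I_top (Tr_top (Rs k.+1))).
have Rs0E n : (n <= N)%N -> Rs0 n = combR Z n.
  elim: n => [//|n IH] le_nN.
  rewrite [combR Z n.+1]/= -(IH (ltnW le_nN)) -(chain n le_nN).
  rewrite /Z scalerA mulVf ?scale1r; last first.
    by apply: Pd_neq0 => k lt_kn; apply/d_odd/(leq_trans lt_kn le_nN).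
  by rewrite addrC subrK.
have herm_Rs0 k : (k <= N)%N -> herm_op (Rs0 (N - k)%N).
  elim: k => [|k IH] le_kN; first by rewrite subn0 Rs0N.
  set m := (N - k.+1)%N; have lt_mN : (m < N)%N by rewrite ltn_subrL N_gt0.
  move: (IH (ltnW le_kN)); rewrite -(subnSK le_kN) -/m => /herm_ptrace herm_tr.
  apply: (@herm_of_tens1 _ (d m.*2)); first by apply: d_gt0; rewrite ltn_double.
  by rewrite -[tensmx _ _]/(I_top (Rs0 m)) -(chain m lt_mN).
exists Z; split; last by rewrite -Rs0N Rs0E.
move=> k lt_kN; have herm_Rs : herm_op (Rs k.+1).
  by move: (herm_Rs0 _ (leq_subr k.+1 N)); rewrite subKn.
split; last first.
  by rewrite linearZ /= ptrace_traceless_part ?scaler0 ?natr_pos_neq0 ?d_odd.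
apply/hermZ; first exact: realn.
by apply/hermB/hermZ/herm_tens1/herm_ptrace => //; rewrite rpredV realn.
Qed.

End Normalization.

Definition ord_ext (T : nat -> Type) (N : nat) (dflt : forall k, T k)
    (Y : forall m : 'I_N, T m) (k : nat) : T k :=
  (if (k < N)%N as b return (k < N)%N = b -> T k
   then fun lt_kN => Y (Ordinal lt_kN) else fun _ => dflt k) (erefl (k < N)%N).

Lemma ord_extE (T : nat -> Type) (N : nat) (dflt : forall k, T k)
    (Y : forall m : 'I_N, T m) (m : 'I_N) : ord_ext dflt Y m = Y m.
Proof.
case: m => k lt_kN; rewrite /ord_ext /=.
move: (erefl (k < N)%N); rewrite {2 3}lt_kN => e.
by rewrite (bool_irrelevance e lt_kN).
Qed.

Section SpanD.
Variables (C : numClosedFieldType) (d : nat -> nat) (N : nat) (mE mF : nat -> nat).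
Variables (E : forall k : nat, 'I_(mE k) -> 'M[C]_(d k))
          (F : forall k : nat, 'I_(mF k) -> 'M[C]_(Dim d k.+1)).
Local Notation lift n M := (@liftI C d n M).

Lemma in_real_span_DP (X : 'M[C]_(Dim d N.*2)) :
  in_real_span_D E F X <->
  exists Y : forall m : 'I_N, 'M[C]_(Dim d (m : nat).*2.+2),
    (forall m : 'I_N, in_tens_span (@E _) (@F _) (Y m)) /\
    X = \sum_(m < N) lift (m : nat).*2.+2 N.*2 (Y m).
Proof.
have le_lift (m : 'I_N) : ((m : nat).*2.+2 <= N.*2)%N by rewrite -doubleS leq_double.
have lift_span (m : 'I_N) (c : 'I_(mE (m : nat).*2.+1) -> 'I_(mF (m : nat).*2) -> C) :
    lift (m : nat).*2.+2 N.*2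
      (\sum_(a < mE (m : nat).*2.+1) \sum_(j < mF (m : nat).*2) c a j *: tensmx (@E _ a) (@F _ j))
    = \sum_(a < mE (m : nat).*2.+1) \sum_(j < mF (m : nat).*2) c a j *: D_elem N (@E _ a) (@F _ j).
  rewrite liftI_sum //; apply: eq_bigr => a _.
  by rewrite liftI_sum //; apply: eq_bigr => j _; rewrite liftIZ.
split=> [[c [rc ->]] | [Y [spanY ->]]].
  exists (fun m : 'I_N => \sum_(a < mE (m : nat).*2.+1) \sum_(j < mF (m : nat).*2)
                     c m a j *: tensmx (@E _ a) (@F _ j)).
  by split=> [m|]; [exists (c m) | apply: eq_bigr => m _; rewrite lift_span].
have /fin_all_exists [c cE] := spanY.
exists c; split=> [m a j|]; first by case: (cE m).
by apply: eq_bigr => m _; case: (cE m) => _ ->; rewrite lift_span.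
Qed.

Hypothesis N_gt0 : (0 < N)%N.
Hypothesis d_gt0 : forall k, (k < N.*2)%N -> (0 < d k)%N.
Hypothesis basisE : forall m, (m < N)%N ->
  real_basis (@traceless_herm_op C (d m.*2.+1)) (@E m.*2.+1).
Hypothesis basisF : forall m, (m < N)%N ->
  real_basis (@herm_op C (Dim d m.*2.+1)) (@F m.*2).

Let d_odd k : (k < N)%N -> (0 < d k.*2.+1)%N.
Proof. by move=> lt_kN; apply: d_gt0; rewrite -doubleS leq_double. Qed.

Let le_lift (m : 'I_N) : ((m : nat).*2.+2 <= N.*2)%N.
Proof. by rewrite -doubleS leq_double. Qed.

Lemma normalized_span (R : 'M[C]_(Dim d N.*2)) : herm_op R -> comb_normalized R ->
  exists X, in_real_span_D E F X /\ R = (Pd d N)%:R^-1 *: 1%:M + X.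
Proof.
move=> hR /(normalized_combR N_gt0 d_gt0 hR) [Z [hZ ->]].
exists ((Pd d N)%:R^-1 *: \sum_(m < N) lift (m : nat).*2.+2 N.*2 (Z m)).
split; last by rewrite combR_expand scalerDr.
apply/in_real_span_DP; exists (fun m : 'I_N => (Pd d N)%:R^-1 *: Z m); split=> [m|].
  have [hermZ trZ] := hZ m (ltn_ord m).
  have spanZ := tens_decomp (basisF (ltn_ord m)) (basisE (ltn_ord m)) hermZ trZ.
  by apply: tens_span_scale spanZ; rewrite rpredV realn.
by rewrite scaler_sumr; apply: eq_bigr => m _; rewrite liftIZ.
Qed.

Lemma span_normalized (X : 'M[C]_(Dim d N.*2)) :
  in_real_span_D E F X -> comb_normalized ((Pd d N)%:R^-1 *: 1%:M + X).
Proof.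
case/in_real_span_DP => Y [spanY ->].
have Pd_nz : (Pd d N)%:R != 0 :> C by apply: Pd_neq0.
pose Z := @ord_ext (fun k => 'M[C]_(Dim d k.*2.+2)) N (fun k => 0)
            (fun m => (Pd d N)%:R *: Y m).
have -> : (Pd d N)%:R^-1 *: 1%:M + \sum_(m < N) lift (m : nat).*2.+2 N.*2 (Y m) = combR Z N.
  rewrite combR_expand scalerDr scaler_sumr; congr (_ + _); apply: eq_bigr => m _.
  by rewrite /Z ord_extE liftIZ // scalerA mulVf ?scale1r.
apply: combR_normalized => // k lt_kN; split; first exact: d_odd.
have [traceless_E _ _] := basisE lt_kN.
have trY : ptrace (Y (Ordinal lt_kN)) = 0.
  by apply: tens_span_ptrace (spanY _) => a; case: (traceless_E a).
by rewrite /Z (ord_extE _ _ (Ordinal lt_kN)) linearZ /= trY scaler0.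
Qed.

End SpanD.

Unset Implicit Arguments.

Theorem mainTheorem3 (C : numClosedFieldType) (d : nat -> nat) (N : nat)
    (mE mF : nat -> nat)
    (E : forall k : nat, 'I_(mE k) -> 'M[C]_(d k))
    (F : forall k : nat, 'I_(mF k) -> 'M[C]_(Dim d k.+1)) :
  (0 < N)%N ->
  (forall k : nat, (k < N.*2)%N -> (0 < d k)%N) ->
  (forall m : nat, (m < N)%N ->
     real_basis (@traceless_herm_op C (d m.*2.+1)) (E m.*2.+1)) ->
  (forall m : nat, (m < N)%N ->
     real_basis (@herm_op C (Dim d m.*2.+1)) (F m.*2)) ->
  forall R : 'M[C]_(Dim d N.*2), herm_op R ->
  (comb_normalized R <->
     exists X : 'M[C]_(Dim d N.*2), in_real_span_D E F X /\
       R = ((\prod_(m < N) d m.*2.+1)%N)%:R^-1 *: 1%:M + X) /\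
  (det_comb R <->
     psd R /\
     exists X : 'M[C]_(Dim d N.*2), in_real_span_D E F X /\
       R = ((\prod_(m < N) d m.*2.+1)%N)%:R^-1 *: 1%:M + X).
Proof.
move=> N_gt0 d_gt0 basisE basisF R hR.
have normalizedP : comb_normalized R <->
    exists X, in_real_span_D E F X /\ R = (Pd d N)%:R^-1 *: 1%:M + X.
  split; first exact: normalized_span.
  by case=> X [spanX ->]; exact: (span_normalized N_gt0 d_gt0 basisE spanX).
by split=> //; split=> -[psdR /normalizedP].
Qed.
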